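(* Let $n\ge2$. The set $\mathcal{C}=\{N\in\mathcal{G}_n:\mathbb{F}_n/N\text{ is co-Hopfian}\}$ is in $\mathbf{\Pi}^0_2$, and $\mathcal{C}$ is not closed in $\mathcal{G}_n$.
   Context: $\mathbb{F}_n$ is the free group on $\gamma_1,\dots,\gamma_n$. $\mathcal{G}_n$ is the set of normal subgroups $N\trianglelefteq\mathbb{F}_n$, viewed as a subset of $\{0,1\}^{\mathbb{F}_n}$ with the subspace topology of the product of discrete topologies (a compact zero-dimensional Polish space). A group is co-Hopfian if every injective endomorphism of it is an isomorphism. $\mathbf{\Pi}^0_2$ = countable intersections of open sets. *)

From mathcomp Require Import all_boot.
Set Implicit Arguments. Unset Strict Implicit. Unset Printing Implicit Defensive.

(* A letter is (i, b): b = true means gamma_i, b = false means gamma_i^-1. *)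
Definition letter (n : nat) := ('I_n * bool)%type.

Definition canc n (x y : letter n) : bool := (x.1 == y.1) && (x.2 != y.2).

Fixpoint reducedb n (w : seq (letter n)) : bool :=
  match w with
  | x :: ((y :: _) as t) => ~~ canc x y && reducedb t
  | _ => true
  end.

Definition red_step n (x : letter n) (acc : seq (letter n)) : seq (letter n) :=
  match acc with
  | y :: t => if canc x y then t else x :: acc
  | [::] => [:: x]
  end.

Definition reduce n (w : seq (letter n)) : seq (letter n) := foldr (@red_step n) [::] w.

Lemma reducedb_tail n (y : letter n) t : reducedb (y :: t) -> reducedb t.
Proof. by case: t => [|z t] //= /andP[]. Qed.

Lemma reduce_reduced n (w : seq (letter n)) : reducedb (reduce w).
Proof.
elim: w => [|x w IH] //=; rewrite /reduce /= -/(reduce w).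
move: IH; case: (reduce w) => [|y t] //= IH.
case: ifP => H; first exact: (reducedb_tail IH).
by rewrite /= H IH.
Qed.

Definition F (n : nat) := {w : seq (letter n) | reducedb w}.

Definition Fone n : F n := exist _ [::] erefl.
Definition Fmul n (u v : F n) : F n :=
  exist _ (reduce (val u ++ val v)) (reduce_reduced _).
Definition flip n (x : letter n) : letter n := (x.1, ~~ x.2).
Definition Finv n (u : F n) : F n :=
  exist _ (reduce (rev (map (@flip n) (val u)))) (reduce_reduced _).
Definition gen n (i : 'I_n) : F n := exist _ [:: (i, true)] erefl.

Definition isNormal n (N : F n -> bool) : Prop :=
  [/\ N (Fone n),
      (forall x y, N x -> N y -> N (Fmul x (Finv y))) &
      (forall g x, N x -> N (Fmul (Fmul g x) (Finv g)))].

(* The quotient F_n/N, presented as F_n with the congruence x ~ y iff x y^-1 in N.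
   Endomorphisms of F_n/N are exactly (classes of) maps f : F_n -> F_n
   respecting ~ and multiplicative up to ~. *)
Definition qeq n (N : F n -> bool) (x y : F n) : Prop := N (Fmul x (Finv y)).

Definition quot_coHopfian n (N : F n -> bool) : Prop :=
  forall f : F n -> F n,
    (forall x y, qeq N x y -> qeq N (f x) (f y)) ->
    (forall x y, qeq N (f (Fmul x y)) (Fmul (f x) (f y))) ->
    (forall x y, qeq N (f x) (f y) -> qeq N x y) ->
    (forall y, exists x, qeq N (f x) y).

Definition open_set (T : eqType) (U : (T -> bool) -> Prop) : Prop :=
  forall x, U x -> exists s : seq T,
    forall y, (forall g, g \in s -> y g = x g) -> U y.

Definition closed_set (T : eqType) (K : (T -> bool) -> Prop) : Prop :=
  open_set (fun x => ~ K x).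

Definition Pi02_in (T : eqType) (G C : (T -> bool) -> Prop) : Prop :=
  exists U : nat -> (T -> bool) -> Prop,
    (forall k, open_set (U k)) /\ (forall x, G x -> (C x <-> forall k, U k x)).

Definition closed_in (T : eqType) (G C : (T -> bool) -> Prop) : Prop :=
  exists K, closed_set K /\ (forall x, G x -> (C x <-> K x)).

From mathcomp Require Import all_boot all_algebra zify.
From Stdlib Require Import Classical.
Set Implicit Arguments. Unset Strict Implicit. Unset Printing Implicit Defensive.
Import GRing.Theory Num.Theory.

(* Every endomorphism of F_n/N lifts to the endomorphism of F_n determined by
   the images of the generators, so N fails to be co-Hopfian iff some pair
   (t, y) in the countable set F_n^n * F_n gives an injective endomorphism of
   F_n/N missing the class of y.  Each such failure is witnessed by finitely
   many values of N, so co-Hopficity is a countable intersection of open sets.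
   For non-closedness, let s be the exponent sum in gamma_1: the kernel of s
   has quotient Z, which is not co-Hopfian (doubling), and it is the limit of
   the preimages of mZ (m >= 1), whose quotients Z/mZ are finite, hence co-Hopfian. *)

Section FreeGroup.
Variable n : nat.
Implicit Types (s w : seq (letter n)) (x y : letter n) (u v a b c : F n).

Definition act s w := foldr (@red_step n) w s.

Lemma act_cat s1 s2 w : act (s1 ++ s2) w = act s1 (act s2 w).
Proof. by rewrite /act foldr_cat. Qed.

Lemma reduceE s : reduce s = act s [::]. Proof. by []. Qed.

Lemma reduce_cons x s : reduce (x :: s) = red_step x (reduce s). Proof. by []. Qed.

Lemma red_step_reduced x w : reducedb w -> reducedb (red_step x w).
Proof.
case: w => [|y t] //= Hw; case: ifP => C; first exact: reducedb_tail Hw.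
by rewrite /= C Hw.
Qed.

Lemma act_reduced s w : reducedb w -> reducedb (act s w).
Proof. by elim: s => //= x s IH /IH; apply: red_step_reduced. Qed.

Lemma red_step_cons x w : reducedb (x :: w) -> red_step x w = x :: w.
Proof. by case: w => [|y t] //= /andP[/negbTE ->]. Qed.

Lemma reduce_id w : reducedb w -> reduce w = w.
Proof.
elim: w => [|x w IH] // Hw.
by rewrite reduce_cons IH ?red_step_cons // (reducedb_tail Hw).
Qed.

Lemma flipK : involutive (@flip n).
Proof. by case=> i b; rewrite /flip /= negbK. Qed.

Lemma canc_flip x y : canc x y -> y = flip x.
Proof. by case: x y => [i b] [j c] /andP[/= /eqP -> ]; case: b; case: c. Qed.

Lemma canc_flipl x : canc (flip x) x.
Proof. by case: x => i b; rewrite /canc /= eqxx; case: b. Qed.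

Lemma red_stepK x w : reducedb w -> red_step (flip x) (red_step x w) = w.
Proof.
case: w => [|y t] /=; first by rewrite canc_flipl.
case: ifP => [/canc_flip -> Hw | _ _]; last by rewrite /= canc_flipl.
by rewrite red_step_cons.
Qed.

Lemma act_red_step x r w :
  reducedb w -> act (red_step x r) w = red_step x (act r w).
Proof.
move=> Hw; case: r => [|y t] //=; case: ifP => // /canc_flip ->.
by rewrite -{1}(flipK x) red_stepK // act_reduced.
Qed.

Lemma act_reduce s w : reducedb w -> act (reduce s) w = act s w.
Proof.
by move=> Hw; elim: s => [|x s IH] //; rewrite reduce_cons act_red_step // IH.
Qed.

Lemma act_invK s w : reducedb w -> act (rev (map (@flip n) s)) (act s w) = w.
Proof.
elim: s w => [|x s IH] w Hw //=.
by rewrite rev_cons -cats1 act_cat /= red_stepK ?act_reduced // IH.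
Qed.

Lemma FmulE u v : val (Fmul u v) = act (val u) (val v).
Proof. by rewrite /= reduceE act_cat -reduceE reduce_id // (valP v). Qed.

Lemma mul1F u : Fmul (Fone n) u = u.
Proof. by apply: val_inj; rewrite FmulE. Qed.

Lemma mulF1 u : Fmul u (Fone n) = u.
Proof. by apply: val_inj; rewrite FmulE -reduceE reduce_id // (valP u). Qed.

Lemma mulFA a b c : Fmul a (Fmul b c) = Fmul (Fmul a b) c.
Proof.
apply: val_inj; rewrite !FmulE.
have -> : act (val a) (val b) = reduce (val a ++ val b).
  by rewrite reduceE act_cat -reduceE reduce_id // (valP b).
by rewrite act_reduce ?act_cat // (valP c).
Qed.

Lemma mulVF u : Fmul (Finv u) u = Fone n.
Proof.
apply: val_inj; rewrite FmulE /= act_reduce ?(valP u) //.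
by rewrite -{2}(reduce_id (valP u)) reduceE act_invK.
Qed.

Lemma mulFV u : Fmul u (Finv u) = Fone n.
Proof.
apply: val_inj; rewrite FmulE /= reduceE.
have := @act_invK (rev (map (@flip n) (val u))) [::] erefl.
by rewrite map_rev revK (mapK flipK).
Qed.

Lemma mulF_eq1 a b : Fmul a b = Fone n -> a = Finv b.
Proof. by move=> ab1; rewrite -[a]mulF1 -(mulFV b) mulFA ab1 mul1F. Qed.

Lemma FinvK : involutive (@Finv n).
Proof. by move=> u; symmetry; apply: mulF_eq1; rewrite mulFV. Qed.

Lemma FinvM a b : Finv (Fmul a b) = Fmul (Finv b) (Finv a).
Proof.
symmetry; apply: mulF_eq1.
by rewrite mulFA -(mulFA (Finv b)) mulVF mulF1 mulVF.
Qed.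

Lemma Finv1 : Finv (Fone n) = Fone n.
Proof. by symmetry; apply: mulF_eq1; rewrite mul1F. Qed.

End FreeGroup.

Section Congruence.
Variables (n : nat) (N : F n -> bool).
Hypothesis normalN : isNormal N.
Implicit Types (a b c : F n).

Lemma normal1 : N (Fone n). Proof. by case: normalN. Qed.

Lemma normalV a : N a -> N (Finv a).
Proof. by case: normalN => _ NB _ /(NB _ _ normal1); rewrite mul1F. Qed.

Lemma normalM a b : N a -> N b -> N (Fmul a b).
Proof. by case: normalN => _ NB _ Na /normalV /(NB _ _ Na); rewrite FinvK. Qed.

Lemma normalJ g a : N a -> N (Fmul (Fmul g a) (Finv g)).
Proof. by case: normalN => _ _; apply. Qed.

Lemma qeq_refl a : qeq N a a. Proof. by rewrite /qeq mulFV normal1. Qed.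

Lemma qeq_sym a b : qeq N a b -> qeq N b a.
Proof. by rewrite /qeq => /normalV; rewrite FinvM FinvK. Qed.

Lemma qeq_trans a b c : qeq N a b -> qeq N b c -> qeq N a c.
Proof.
rewrite /qeq => ab bc; have := normalM ab bc.
by rewrite -mulFA (mulFA (Finv b)) mulVF mul1F.
Qed.

Lemma qeqMr a b c : qeq N a b -> qeq N (Fmul a c) (Fmul b c).
Proof. by rewrite /qeq FinvM -mulFA (mulFA c) mulFV mul1F. Qed.

Lemma qeqMl a b c : qeq N a b -> qeq N (Fmul c a) (Fmul c b).
Proof. by rewrite /qeq FinvM => /(normalJ c); rewrite -!mulFA. Qed.

Lemma qeqM a a' b b' :
  qeq N a a' -> qeq N b b' -> qeq N (Fmul a b) (Fmul a' b').
Proof. by move=> aa' bb'; apply: qeq_trans (qeqMr _ aa') (qeqMl _ bb'). Qed.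

Lemma qeq1 a : qeq N a (Fone n) = N a.
Proof. by rewrite /qeq Finv1 mulF1. Qed.

End Congruence.

Section Evaluation.
Variable n : nat.
Implicit Types (u v a b : F n) (t : {ffun 'I_n -> F n}) (s : seq (letter n)).

Definition ev_letter t (l : letter n) : F n :=
  if l.2 then t l.1 else Finv (t l.1).

Definition ev_word t s := foldr (fun l acc => Fmul (ev_letter t l) acc) (Fone n) s.

Definition ev t u := ev_word t (val u).

Lemma ev_letter_flip t l : Fmul (ev_letter t l) (ev_letter t (flip l)) = Fone n.
Proof. by case: l => i [] /=; rewrite /ev_letter /= ?mulFV ?mulVF. Qed.

Lemma ev_word_red_step t l s :
  ev_word t (red_step l s) = Fmul (ev_letter t l) (ev_word t s).
Proof.
case: s => [|y s] //=; case: ifP => // /canc_flip ->.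
by rewrite mulFA ev_letter_flip mul1F.
Qed.

Lemma ev_word_reduce t s : ev_word t (reduce s) = ev_word t s.
Proof.
by elim: s => [|x s IH] //; rewrite reduce_cons ev_word_red_step IH.
Qed.

Lemma ev_word_cat t s1 s2 :
  ev_word t (s1 ++ s2) = Fmul (ev_word t s1) (ev_word t s2).
Proof. by elim: s1 => [|x s IH] /=; rewrite ?mul1F // IH mulFA. Qed.

Lemma evM t u v : ev t (Fmul u v) = Fmul (ev t u) (ev t v).
Proof. by rewrite /ev /= ev_word_reduce ev_word_cat. Qed.

Lemma evV t u : ev t (Finv u) = Finv (ev t u).
Proof. by apply: mulF_eq1; rewrite -evM mulVF. Qed.

Lemma ev_gen t i : ev t (gen i) = t i.
Proof. by rewrite /ev /= /ev_letter mulF1. Qed.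

Lemma Finv_gen (i : 'I_n) : Finv (gen i) = exist _ [:: (i, false)] erefl.
Proof. by apply: val_inj. Qed.

Lemma F_cons (l : letter n) w (lw : reducedb (l :: w)) :
  exist _ (l :: w) lw =
  Fmul (exist _ [:: l] erefl) (exist _ w (reducedb_tail lw)).
Proof. by apply: val_inj; rewrite FmulE /= red_step_cons. Qed.

Section QuotientHomomorphism.
Variables (N : F n -> bool) (f : F n -> F n).
Hypotheses (normalN : isNormal N)
           (fM : forall x y, qeq N (f (Fmul x y)) (Fmul (f x) (f y))).

Lemma qhom1 : qeq N (f (Fone n)) (Fone n).
Proof.
have := qeqMr (Finv (f (Fone n))) (fM (Fone n) (Fone n)).
by rewrite mul1F -mulFA mulFV mulF1 => /(qeq_sym normalN).
Qed.

Lemma qhomV u : qeq N (f (Finv u)) (Finv (f u)).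
Proof.
have := qeq_trans normalN (qeq_sym normalN (fM (Finv u) u)).
rewrite mulVF => /(_ _ qhom1) /(qeqMr (Finv (f u))).
by rewrite -mulFA mulFV mulF1 mul1F.
Qed.

Lemma qhom_ev u : qeq N (f u) (ev [ffun i => f (gen i)] u).
Proof.
case: u => w; elim: w => [|l w IH] lw.
  have -> : exist _ [::] lw = Fone n by apply: val_inj.
  exact: qhom1.
rewrite F_cons evM; apply: (qeq_trans normalN (fM _ _)).
apply: (qeqM normalN) (IH _).
case: l {lw} => i [].
  by rewrite -[exist _ _ _]/(gen i) ev_gen ffunE; apply: qeq_refl.
by rewrite -Finv_gen evV ev_gen ffunE; apply: qhomV.
Qed.

End QuotientHomomorphism.
End Evaluation.

Section CoHopfianPi02.
Variable n : nat.
Implicit Types (N : F n -> bool) (t : {ffun 'I_n -> F n}) (y : F n).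

(* The first clause says that [ev t] induces a well-defined injective
   endomorphism of [F n / N], the second that it misses the class of [y]. *)
Definition ev_inj_nonsurj N t y : Prop :=
  (forall x, N x = N (ev t x)) /\ (forall x, ~ qeq N (ev t x) y).

Lemma coHopfianP N : isNormal N ->
  quot_coHopfian N <-> forall t y, ~ ev_inj_nonsurj N t y.
Proof.
move=> normalN; split=> [coH t y [evN evy] | noW f fwd fM finj y].
  have qeq_ev x z : qeq N (ev t x) (ev t z) = qeq N x z.
    by rewrite /qeq -evV -evM -evN.
  have [x] : exists x, qeq N (ev t x) y.
    by apply: coH => x z; rewrite ?qeq_ev // evM; apply: qeq_refl.
  exact: evy.
apply: NNPP => nsurj; apply: (noW [ffun i => f (gen i)] y); split=> x.
  have fx := qhom_ev normalN fM x; have f1 := qhom1 normalN fM.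
  apply/idP/idP; rewrite -!(@qeq1 _ N) => x1.
    apply: (qeq_trans normalN (qeq_sym normalN fx)).
    exact: (qeq_trans normalN (fwd _ _ x1) f1).
  apply: finj; apply: (qeq_trans normalN fx).
  exact: (qeq_trans normalN x1 (qeq_sym normalN f1)).
move=> xy; apply: nsurj; exists x.
exact: (qeq_trans normalN (qhom_ev normalN fM x) xy).
Qed.

Lemma open_not_ev_inj_nonsurj t y : open_set (fun N => ~ ev_inj_nonsurj N t y).
Proof.
move=> N /not_and_or [/not_all_ex_not [x Nx] | /not_all_ex_not [x Nxy]].
  exists [:: x; ev t x] => M MN [evNM _]; apply: Nx.
  by rewrite -!MN ?inE ?eqxx ?orbT.
exists [:: Fmul (ev t x) (Finv y)] => M MN [_ /(_ x)].
by rewrite /qeq MN ?inE.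
Qed.

Lemma coHopfian_Pi02 : Pi02_in (@isNormal n) (fun N => isNormal N /\ quot_coHopfian N).
Proof.
pose U k N := if unpickle k : option ({ffun 'I_n -> F n} * F n) is Some (t, y)
              then ~ ev_inj_nonsurj N t y else True.
exists U; split=> [k | N normalN].
  rewrite /U; case: unpickle => [[t y]|]; first exact: open_not_ev_inj_nonsurj.
  by move=> N _; exists [::].
rewrite (coHopfianP normalN); split=> [[_ noW] k | UN].
  by rewrite /U; case: unpickle => // -[t y].
by split=> // t y; have := UN (pickle (t, y)); rewrite /U pickleK.
Qed.

End CoHopfianPi02.

Section ExponentSum.
Variables (n : nat) (i0 : 'I_n).
Local Open Scope ring_scope.
Implicit Types (u v : F n) (s : seq (letter n)).

Definition letter_expsum (l : letter n) : int :=
  if l.1 == i0 then (if l.2 then 1 else -1) else 0.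

Definition word_expsum s : int := \sum_(l <- s) letter_expsum l.

Definition expsum u := word_expsum (val u).

Lemma letter_expsum_flip l : letter_expsum (flip l) = - letter_expsum l.
Proof. by case: l => i []; rewrite /letter_expsum /=; case: eqP; rewrite ?oppr0. Qed.

Lemma word_expsum_red_step l s :
  word_expsum (red_step l s) = letter_expsum l + word_expsum s.
Proof.
rewrite /word_expsum; case: s => [|y s] /=; first by rewrite big_seq1 big_nil addr0.
case: ifP => [/canc_flip -> | _]; last by rewrite big_cons.
by rewrite big_cons letter_expsum_flip addNKr.
Qed.

Lemma word_expsum_reduce s : word_expsum (reduce s) = word_expsum s.
Proof.
elim: s => [|x s IH] //.
by rewrite reduce_cons word_expsum_red_step IH /word_expsum big_cons.
Qed.

Lemma expsum1 : expsum (Fone n) = 0.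
Proof. exact: big_nil. Qed.

Lemma expsumM u v : expsum (Fmul u v) = expsum u + expsum v.
Proof. by rewrite /expsum /= word_expsum_reduce /word_expsum big_cat. Qed.

Lemma expsumV u : expsum (Finv u) = - expsum u.
Proof.
rewrite /expsum /= word_expsum_reduce /word_expsum big_rev big_map.
by rewrite -sumrN; apply: eq_bigr => l _; rewrite letter_expsum_flip.
Qed.

Lemma expsum_gen : expsum (gen i0) = 1.
Proof. by rewrite /expsum /word_expsum big_seq1 /letter_expsum /= eqxx. Qed.

Lemma expsum_gen_iter k : expsum (iter k (Fmul (gen i0)) (Fone n)) = k%:Z.
Proof.
elim: k => [|k IH]; first exact: expsum1.
by rewrite iterS expsumM IH expsum_gen -intS.
Qed.

(* [F n / expsum_dvd m] is [Z / m Z]; in particular it is [Z] for [m = 0]. *)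
Definition expsum_dvd (m : nat) u : bool := (m%:Z %| expsum u)%Z.

Lemma expsum_dvd_normal m : isNormal (expsum_dvd m).
Proof.
split=> [|x y|g x]; rewrite /expsum_dvd ?expsum1 ?expsumM ?expsumV.
- exact: dvdz0.
- exact: rpredB.
- by rewrite addrC addKr.
Qed.

Lemma qeq_expsum_dvd m u v :
  qeq (expsum_dvd m) u v = (expsum u == expsum v %[mod m%:Z])%Z.
Proof. by rewrite /qeq /expsum_dvd expsumM expsumV eqz_mod_dvd. Qed.

Lemma expsum_dvd0_not_coHopfian : ~ quot_coHopfian (expsum_dvd 0).
Proof.
have qeq0 u v : qeq (expsum_dvd 0) u v <-> expsum u = expsum v.
  by rewrite qeq_expsum_dvd !modz0; split=> /eqP.
move=> /(_ (fun x => Fmul x x)) coH.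
have [x /qeq0] : exists x, qeq (expsum_dvd 0) (Fmul x x) (gen i0).
  apply: coH => x y; rewrite ?qeq0 ?expsumM.
  - by move=> ->.
  - by rewrite addrACA.
  - by rewrite -!mulr2n => /(pmulrnI (isT : (0 < 2)%N)).
by rewrite expsumM expsum_gen; lia.
Qed.

Lemma expsum_dvd_coHopfian m : quot_coHopfian (expsum_dvd m.+1).
Proof.
pose res u : 'I_m.+1 := inord `|(expsum u %% m.+1%:Z)%Z|%N.
pose rep (k : 'I_m.+1) := iter k (Fmul (gen i0)) (Fone n).
have res_val u : (res u)%:Z = (expsum u %% m.+1%:Z)%Z.
  rewrite inordK ?gez0_abs ?modz_ge0 //.
  by rewrite -ltz_nat gez0_abs ?modz_ge0 // ltz_pmod.
have qeq_res u v : qeq (expsum_dvd m.+1) u v <-> res u = res v.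
  by rewrite qeq_expsum_dvd -!res_val eqz_nat; split=> [/eqP/val_inj | ->].
have res_rep k : res (rep k) = k.
  by apply: val_inj; apply/eqP; rewrite -eqz_nat res_val expsum_gen_iter modz_small //= ltz_nat ltn_ord.
move=> f _ _ finj y.
have g_inj : injective (fun k => res (f (rep k))).
  by move=> k1 k2 /qeq_res /finj /qeq_res; rewrite !res_rep.
have [h _ resfh] := injF_bij g_inj.
by exists (rep (h (res y))); apply/qeq_res; rewrite resfh.
Qed.

End ExponentSum.

Lemma dvdz_small (m : nat) (z : int) : (`|z| < m)%N -> (m%:Z %| z)%Z = (z == 0%R).
Proof.
move=> zm; rewrite dvdzE /= -absz_eq0.
have [-> | z_gt0] := posnP `|z|%N; first exact: dvdn0.
by rewrite gtnNdvd.
Qed.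

Lemma expsum_dvd_small n (i0 : 'I_n) (m : nat) u :
  (`|expsum i0 u| < m)%N -> expsum_dvd i0 m u = expsum_dvd i0 0 u.
Proof. by move=> um; rewrite /expsum_dvd dvd0z dvdz_small. Qed.

Theorem mainTheorem16 (n : nat) (hn : 2 <= n) :
  Pi02_in (@isNormal n) (fun N => isNormal N /\ quot_coHopfian N) /\
  ~ closed_in (@isNormal n) (fun N => isNormal N /\ quot_coHopfian N).
Proof.
split; first exact: coHopfian_Pi02.
have i0 : 'I_n := Ordinal (ltnW hn).
case=> K [closedK CK].
have notK0 : ~ K (expsum_dvd i0 0).
  by move/(CK _ (expsum_dvd_normal _ _)) => [_ /expsum_dvd0_not_coHopfian].
have [s nearK0] := closedK _ notK0.
pose m := \max_(g <- s) `|expsum i0 g|%N.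
apply: (nearK0 (expsum_dvd i0 m.+1)).
  by move=> g gs; apply: expsum_dvd_small; rewrite ltnS; apply: leq_bigmax_seq.
apply/(CK _ (expsum_dvd_normal _ _)).
by split; [apply: expsum_dvd_normal | apply: expsum_dvd_coHopfian].
Qed.
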